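(* In a single positioning infrastructure in which $N_{\text{min}}$ is the minimum number of anchors required for positioning, a subset of anchors containing at least one manipulated (adversarial) pseudorange can contain at most $N_{\text{min}}-1$ benign pseudoranges without being detected; that is, any subset containing at least one adversarial and at least $N_{\text{min}}$ benign pseudoranges yields an inconsistent overdetermined system.
   Context: Idealized model: a platform at unknown true position in $\mathbf{R}^3$ receives ranging measurements (pseudoranges) from anchors with known positions; positioning from a subset solves a system with $N_{\text{min}}$ unknowns (e.g., 3D position plus receiver clock bias for GNSS, $N_{\text{min}}=4$) using one equation per anchor in the subset. Noise is taken to be negligible while attacker-induced deviations are preserved, and anchor geometry is good (the equations are linearly independent). Benign pseudoranges are exactly consistent with the true position; adversarial pseudoranges are deviated by the attacker. *)

(* Linearized (idealized, noise-free) positioning model.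
   m anchors, Nmin unknowns (state vector x : 'cV_Nmin). *)
From HB Require Import structures.
From mathcomp Require Import all_boot all_order all_algebra.
Set Implicit Arguments. Unset Strict Implicit. Unset Printing Implicit Defensive.
Import Order.TTheory GRing.Theory Num.Theory.
Local Open Scope ring_scope.

Definition good_geometry (R : fieldType) (m Nmin : nat) (A : 'M[R]_(m, Nmin)) :=
  forall f : 'I_Nmin -> 'I_m, injective f -> row_free (rowsub f A).

Definition benign_adversarial (R : fieldType) (m Nmin : nat)
  (A : 'M[R]_(m, Nmin)) (rho : 'I_m -> R) (xtrue : 'cV[R]_Nmin) (B : {set 'I_m}) :=
  (forall i, i \in B -> rho i = (A *m xtrue) i 0) /\
  (forall i, i \notin B -> rho i != (A *m xtrue) i 0).

Definition consistent (R : fieldType) (m Nmin : nat)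
  (A : 'M[R]_(m, Nmin)) (rho : 'I_m -> R) (S : {set 'I_m}) :=
  exists x : 'cV[R]_Nmin, forall i, i \in S -> (A *m x) i 0 = rho i.

From HB Require Import structures.
From mathcomp Require Import all_boot all_order all_algebra.
Set Implicit Arguments. Unset Strict Implicit. Unset Printing Implicit Defensive.
Local Open Scope ring_scope.

(* Any [Nmin] of the anchors already pin the state down: with good geometry
   their square subsystem is invertible.  So a solution of the subsystem on [S]
   agrees with the true state on the [Nmin] benign anchors of [S], hence equals
   it, and then cannot match the deviated pseudorange of an adversarial anchor
   of [S]. *)

Lemma injective_ord_in (T : finType) (C : {pred T}) (n : nat) :
  (n <= #|C|)%N -> exists2 f : 'I_n -> T, injective f & forall k, f k \in C.
Proof.
move=> le_n_C; exists (fun k => enum_val (widen_ord le_n_C k)).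
  by move=> k l /enum_val_inj /(congr1 val) /= /val_inj.
by move=> k; apply: enum_valP.
Qed.

Section GoodGeometry.

Variables (R : fieldType) (m Nmin : nat) (A : 'M[R]_(m, Nmin)).
Hypothesis goodA : good_geometry A.

Lemma good_geometry_rowsub_inj (p : nat) (f : 'I_Nmin -> 'I_m) :
  injective f -> injective (mulmx (rowsub f A) : 'M_(Nmin, p) -> 'M_(Nmin, p)).
Proof.
move=> f_inj; apply: row_full_inj.
by rewrite row_full_unit -row_free_unit goodA.
Qed.

Lemma good_geometry_state_unique (C : {set 'I_m}) (x y : 'cV[R]_Nmin) :
  (Nmin <= #|C|)%N ->
  (forall i, i \in C -> (A *m x) i 0 = (A *m y) i 0) -> x = y.
Proof.
move=> le_Nmin_C eq_xy; have [f f_inj fC] := injective_ord_in le_Nmin_C.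
apply: (good_geometry_rowsub_inj f_inj).
rewrite !mul_rowsub_mx; apply/matrixP => k j.
by move: (eq_xy _ (fC k)); rewrite (ord1 j) !mxE.
Qed.

End GoodGeometry.

Theorem corollary1 (R : realFieldType) (m Nmin : nat)
  (A : 'M[R]_(m, Nmin)) (rho : 'I_m -> R) (xtrue : 'cV[R]_Nmin)
  (B : {set 'I_m}) :
  good_geometry A ->
  benign_adversarial A rho xtrue B ->
  forall S : {set 'I_m},
    (exists2 i, i \in S & i \notin B) ->
    (Nmin <= #|S :&: B|)%N ->
    ~ consistent A rho S.
Proof.
move=> goodA [benign adversarial] S [i Si Bi'] le_Nmin_SB [x solx].
have x_true : x = xtrue.
  apply: (good_geometry_state_unique goodA le_Nmin_SB) => k /setIP [Sk Bk].
  by rewrite solx // benign.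
by move: (adversarial i Bi'); rewrite -x_true -solx // eqxx.
Qed.
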